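(* Let $G$ be a compact semi-simple Lie group. Then $G$ cannot carry any structure of locally Kundt Lie group, i.e. for no left invariant Lorentzian metric $g$ on $G$ is $(G,g)$ a locally Kundt Lie group.
   Context: For a Lie group $G$ with a left invariant Lorentzian metric $g$ and Levi-Civita connection $\nabla$, $(G,g)$ is a locally Kundt Lie group if there exist a non-singular left invariant vector field $V$ with $g(V,V)=0$ and a $1$-form $\alpha$ such that $\nabla_XV=\alpha(X)V$ for all vector fields $X$ orthogonal to $V$. *)

From mathcomp Require Import all_boot all_order all_algebra.
From mathcomp Require Import reals.
Set Implicit Arguments. Unset Strict Implicit. Unset Printing Implicit Defensive.
Import Order.TTheory GRing.Theory Num.Theory.
Local Open Scope ring_scope.

(* The Lie algebra of an n-dimensional Lie group G is modelled on 'rV[R]_n,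
   identified with the left-invariant vector fields of G. *)
Section Defs.
Variable R : realType.
Variable n : nat.
Notation V := 'rV[R]_n.

(* br is a Lie bracket: bilinear (left-linear + antisymmetric), Jacobi. *)
Definition is_lie_bracket (br : V -> V -> V) : Prop :=
  [/\ forall (a : R) (u v w : V), br (a *: u + v) w = a *: br u w + br v w,
      forall u v : V, br u v = - br v u
    & forall u v w : V, br u (br v w) + br v (br w u) + br w (br u v) = 0].

Definition ad_mx (br : V -> V -> V) (x : V) : 'M[R]_n := lin1_mx (br x).

Definition killing (br : V -> V -> V) (x y : V) : R :=
  \tr (ad_mx br x *m ad_mx br y).

Definition bform (S : 'M[R]_n) (u v : V) : R := (u *m S *m v^T) 0 0.

(* semisimple (Cartan's criterion): Killing form nondegenerate *)
Definition semisimple_lie (br : V -> V -> V) : Prop :=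
  forall x : V, (forall y : V, killing br x y = 0) -> x = 0.

(* compact Lie algebra (Lie algebra of a compact Lie group): admits an
   ad-invariant (positive definite) inner product *)
Definition compact_lie (br : V -> V -> V) : Prop :=
  exists Q : 'M[R]_n,
    [/\ Q^T = Q,
        forall u : V, u != 0 -> 0 < bform Q u u
      & forall x y z : V, bform Q (br x y) z + bform Q y (br x z) = 0].

(* a left-invariant Lorentzian metric: symmetric, of signature (-,+,...,+) *)
Definition lorentzian (S : 'M[R]_n) : Prop :=
  S^T = S /\
  exists P : 'M[R]_n, P \in unitmx /\
    P *m S *m P^T = diag_mx (\row_(i < n) if val i == 0%N then -1 else 1).

(* Levi-Civita connection restricted to left-invariant vector fields:
   torsion-free and metric (this determines it uniquely, Koszul). *)
Definition levi_civita (br : V -> V -> V) (S : 'M[R]_n) (nabla : V -> V -> V)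
  : Prop :=
  (forall u v : V, nabla u v - nabla v u = br u v) /\
  (forall u v w : V, bform S (nabla u v) w + bform S v (nabla u w) = 0).

Definition locally_kundt (S : 'M[R]_n) (nabla : V -> V -> V) : Prop :=
  exists (v : V) (alpha : 'cV[R]_n),
    [/\ v != 0, bform S v v = 0
      & forall x : V, bform S x v = 0 -> nabla x v = (x *m alpha) 0 0 *: v].

End Defs.

(* A compact Lie algebra carries an ad-invariant inner product Q.  If v is
   the vector of a Kundt structure, the Levi-Civita identities make the
   hyperplane v^perp (for the Lorentzian metric) a subalgebra.  Written with Q, this hyperplane is w^perp for some w != 0,
   and invariance of Q forces [x, w] to be Q-orthogonal to everything for x in
   w^perp, so w is central.  A central element lies in the kernel of the
   Killing form, contradicting semisimplicity. *)

From mathcomp Require Import all_boot all_order all_algebra.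
From mathcomp Require Import reals.
From mathcomp Require Import lra.
Set Implicit Arguments. Unset Strict Implicit. Unset Printing Implicit Defensive.
Import Order.TTheory GRing.Theory Num.Theory.
Local Open Scope ring_scope.

Section BilinearForm.
Variables (R : realType) (n : nat).
Notation V := 'rV[R]_n.
Implicit Types (S Q : 'M[R]_n) (u v w y : V).

Lemma bformDZl S (a : R) u v w :
  bform S (a *: u + v) w = a * bform S u w + bform S v w.
Proof. by rewrite /bform !mulmxDl -!scalemxAl !mxE. Qed.

Lemma bformDZr S (a : R) u v w :
  bform S w (a *: u + v) = a * bform S w u + bform S w v.
Proof. by rewrite /bform linearD linearZ /= mulmxDr -scalemxAr !mxE. Qed.

Lemma bformZr S (a : R) u w : bform S u (a *: w) = a * bform S u w.
Proof. by rewrite /bform linearZ /= -scalemxAr mxE. Qed.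

Lemma bformBl S u v w : bform S (u - v) w = bform S u w - bform S v w.
Proof. by rewrite addrC -scaleN1r bformDZl mulN1r addrC. Qed.

Lemma bformC S u v : S^T = S -> bform S u v = bform S v u.
Proof.
move=> ST; rewrite /bform -[in LHS](trmxK (u *m S *m v^T)) mxE.
by rewrite !trmx_mul trmxK ST mulmxA.
Qed.

(* The Q-dual of the linear form y |-> S(y, v). *)
Lemma bform_dualE S Q v y :
  Q \in unitmx -> bform Q (v *m S^T *m invmx Q) y = bform S y v.
Proof.
move=> Qu; rewrite /bform mulmxKV // -[in LHS](trmxK (v *m S^T *m y^T)) mxE.
by rewrite !trmx_mul !trmxK mulmxA.
Qed.

Lemma dual_neq0 S Q v :
  S \in unitmx -> Q \in unitmx -> v != 0 -> v *m S^T *m invmx Q != 0.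
Proof.
move=> Su Qu; rewrite -mulmxA mulmx_free_eq0 // row_free_unit.
by rewrite unitmx_mul unitmx_tr unitmx_inv Su.
Qed.

Lemma bform_projr Q w y :
  bform Q w w != 0 -> bform Q w (y - (bform Q w y / bform Q w w) *: w) = 0.
Proof.
by move=> ww_neq0; rewrite addrC -scaleNr bformDZr mulNr divfK ?addNr.
Qed.

Lemma posdef_bform_eq0 Q u :
  (forall u : V, u != 0 -> 0 < bform Q u u) ->
  (forall y, bform Q u y = 0) -> u = 0.
Proof.
move=> Qpos u_orth; apply/eqP; apply: contraT => /Qpos.
by rewrite u_orth ltxx.
Qed.

Lemma posdef_unitmx Q :
  (forall u : V, u != 0 -> 0 < bform Q u u) -> Q \in unitmx.
Proof.
move=> Qpos; rewrite -row_free_unit -kermx_eq0; apply/eqP/row_matrixP => i.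
rewrite row0; apply: posdef_bform_eq0 Qpos _ => y.
by rewrite /bform -row_mul mulmx_ker row0 !mul0mx mxE.
Qed.

Lemma lorentzian_unitmx S : lorentzian S -> S \in unitmx.
Proof.
case=> _ [P [_ PSP]].
have : P *m S *m P^T \in unitmx.
  rewrite PSP unitmxE det_diag unitfE; apply/prodf_neq0 => i _.
  by rewrite mxE; case: ifP; rewrite ?oppr_eq0 oner_eq0.
by rewrite !unitmx_mul => /andP [/andP []].
Qed.

End BilinearForm.

Section LieAlgebra.
Variables (R : realType) (n : nat).
Notation V := 'rV[R]_n.
Variable br : V -> V -> V.
Hypothesis br_lie : is_lie_bracket br.

Lemma brxx (x : V) : br x x = 0.
Proof.
case: br_lie => _ br_anti _; apply/eqP.
have : (2%:R : R) *: br x x == 0.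
  by rewrite scaler_nat mulr2n {1}br_anti addNr.
by rewrite scalemx_eq0 pnatr_eq0.
Qed.

Lemma central_killing_eq0 (w : V) (y : V) :
  (forall x, br x w = 0) -> killing br w y = 0.
Proof.
case: br_lie => _ br_anti _ w_central; rewrite /killing.
have -> : ad_mx br w = 0.
  by apply/matrixP => i j; rewrite !mxE br_anti w_central oppr0 mxE.
by rewrite mul0mx mxtrace0.
Qed.

Lemma orthogonal_subalgebra_central (Q : 'M[R]_n) (w : V) :
  Q^T = Q -> (forall u : V, u != 0 -> 0 < bform Q u u) ->
  (forall x y z : V, bform Q (br x y) z + bform Q y (br x z) = 0) ->
  w != 0 ->
  (forall x z, bform Q w x = 0 -> bform Q w z = 0 -> bform Q w (br x z) = 0) ->
  forall x, br x w = 0.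
Proof.
move=> QT Qpos Qinv w_neq0 w_perp_sub.
case: br_lie => br_linl _ _.
have ww_neq0 : bform Q w w != 0 by rewrite gt_eqF ?Qpos.
pose t y := bform Q w y / bform Q w w.
have splitE y : y = t y *: w + (y - t y *: w) by rewrite addrC subrK.
have perp_central x : bform Q w x = 0 -> br x w = 0.
  move=> wx; apply: posdef_bform_eq0 Qpos _ => y; rewrite [y]splitE bformDZr.
  have wxw : bform Q (br x w) w = 0.
    by have := Qinv x w w; rewrite [bform Q w _]bformC // => h; lra.
  (* Q([x, w], y') = - Q(w, [x, y']) = 0 for y' in the subalgebra w^perp *)
  have := Qinv x w (y - t y *: w).
  by rewrite w_perp_sub ?bform_projr // addr0 wxw mulr0 add0r.
move=> x; rewrite [x]splitE br_linl brxx perp_central ?bform_projr //.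
by rewrite scaler0 addr0.
Qed.

End LieAlgebra.

Lemma kundt_orthogonal_subalgebra (R : realType) (n : nat)
  (br nabla : 'rV[R]_n -> 'rV[R]_n -> 'rV[R]_n) (S : 'M[R]_n)
  (v : 'rV[R]_n) (alpha : 'cV[R]_n) :
  levi_civita br S nabla ->
  (forall x, bform S x v = 0 -> nabla x v = (x *m alpha) 0 0 *: v) ->
  forall x z, bform S x v = 0 -> bform S z v = 0 -> bform S (br x z) v = 0.
Proof.
case=> torsion_free metric kundt x z xv zv.
have metricE a b c : bform S (nabla a b) c = - bform S b (nabla a c).
  by apply/eqP; rewrite -addr_eq0 metric.
rewrite -torsion_free bformBl !metricE kundt // [nabla z v]kundt //.
by rewrite !bformZr xv zv !mulr0 subrr.
Qed.

Theorem corollary3p4 (R : realType) (n : nat)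
  (br : 'rV[R]_n -> 'rV[R]_n -> 'rV[R]_n)
  (Hlie : is_lie_bracket br)
  (Hcompact : compact_lie br) (Hss : semisimple_lie br)
  (S : 'M[R]_n) (HS : lorentzian S)
  (nabla : 'rV[R]_n -> 'rV[R]_n -> 'rV[R]_n) (HLC : levi_civita br S nabla) :
  ~ locally_kundt S nabla.
Proof.
case=> v [alpha [v_neq0 _ kundt]].
have [Q [QT Qpos Qinv]] := Hcompact.
have Qu := posdef_unitmx Qpos.
set w := v *m S^T *m invmx Q.
have w_neq0 : w != 0 by apply: dual_neq0 => //; apply: lorentzian_unitmx.
have w_perp_sub x z :
    bform Q w x = 0 -> bform Q w z = 0 -> bform Q w (br x z) = 0.
  rewrite !bform_dualE //; exact: kundt_orthogonal_subalgebra HLC kundt x z.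
have w_central :=
  orthogonal_subalgebra_central Hlie QT Qpos Qinv w_neq0 w_perp_sub.
have w_eq0 : w = 0.
  by apply: Hss => y; apply: central_killing_eq0.
by rewrite w_eq0 eqxx in w_neq0.
Qed.
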